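(* Let $\mathbb{F}=[\mathcal{F}_1,\dots,\mathcal{F}_n]$ be an asymmetric fail-prone system on $\mathcal{P}=\{p_1,\dots,p_n\}$ in which every $\mathcal{F}_i$ is nonempty, let $\mathbb{Q}=[\mathcal{Q}_1,\dots,\mathcal{Q}_n]$ be an asymmetric Byzantine quorum system for $\mathbb{F}$, let $F\subseteq\mathcal{P}$ be the set of faulty processes, and suppose the maximal guild $\mathcal{G}_{\max}$ for $F$ is nonempty. Then for every correct process $p_i$ (i.e. $p_i\notin F$) and every quorum $Q_i\in\mathcal{Q}_i$, we have $Q_i\cap\mathcal{G}_{\max}\neq\emptyset$. In other words, $\mathcal{G}_{\max}$ is a kernel for every correct process.
   Context: An asymmetric fail-prone system is an array $\mathbb{F}=[\mathcal{F}_1,\dots,\mathcal{F}_n]$ where each $\mathcal{F}_i\subseteq 2^{\mathcal{P}}$ is a collection of subsets of $\mathcal{P}$, none contained in another. For $\mathcal{A}\subseteq 2^{\mathcal{P}}$, $\mathcal{A}^*=\{A' : A'\subseteq A\text{ for some }A\in\mathcal{A}\}$. An asymmetric Byzantine quorum system for $\mathbb{F}$ is an array $\mathbb{Q}=[\mathcal{Q}_1,\dots,\mathcal{Q}_n]$, $\mathcal{Q}_i\subseteq 2^{\mathcal{P}}$ (elements are quorums for $p_i$), such that (Consistency) for all $i,j$, $Q_i\in\mathcal{Q}_i$, $Q_j\in\mathcal{Q}_j$, $F_{ij}\in\mathcal{F}_i^*\cap\mathcal{F}_j^*$: $Q_i\cap Q_j\not\subseteq F_{ij}$; and (Availability) for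 all $i$, $F_i\in\mathcal{F}_i$ there is $Q_i\in\mathcal{Q}_i$ with $F_i\cap Q_i=\emptyset$. A guild for $F$ is a set $\mathcal{G}\subseteq\mathcal{P}$ such that every $p_i\in\mathcal{G}$ satisfies $p_i\notin F$ and $F\in\mathcal{F}_i^*$, and for every $p_i\in\mathcal{G}$ there is $Q_i\in\mathcal{Q}_i$ with $Q_i\subseteq\mathcal{G}$. The maximal guild $\mathcal{G}_{\max}$ is the union of all guilds for $F$ (itself a guild). A set $K$ is a kernel for $p_i$ if $K\cap Q_i\neq\emptyset$ for all $Q_i\in\mathcal{Q}_i$. *)

From mathcomp Require Import all_boot.
Set Implicit Arguments. Unset Strict Implicit. Unset Printing Implicit Defensive.

Section Defs.
Variable n : nat.
Notation proc := 'I_n.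
Notation pset := {set proc}.
Notation coll := {set {set proc}}.

Definition star (A : coll) : coll :=
  [set A' : pset | [exists A0 in A, A' \subset A0]].

Definition antichain (A : coll) : Prop :=
  forall X Y, X \in A -> Y \in A -> X \subset Y -> X = Y.

Definition fail_prone_system (FF : proc -> coll) : Prop :=
  forall i, antichain (FF i).

Definition asym_quorum_system (FF QQ : proc -> coll) : Prop :=
  (forall i j (Qi Qj Fij : pset), Qi \in QQ i -> Qj \in QQ j ->
      Fij \in star (FF i) -> Fij \in star (FF j) ->
      ~~ (Qi :&: Qj \subset Fij)) /\
  (forall i (Fi : pset), Fi \in FF i ->
      exists2 Qi, Qi \in QQ i & [disjoint Fi & Qi]).

Definition guild (FF QQ : proc -> coll) (F : pset) (G : pset) : Prop :=
  (forall i, i \in G -> i \notin F /\ F \in star (FF i)) /\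
  (forall i, i \in G -> exists2 Qi, Qi \in QQ i & Qi \subset G).

Definition guildb (FF QQ : proc -> coll) (F G : pset) : bool :=
  [forall i in G, (i \notin F) && (F \in star (FF i))] &&
  [forall i in G, [exists Qi in QQ i, Qi \subset G]].

Lemma guildP FF QQ F G : reflect (guild FF QQ F G) (guildb FF QQ F G).
Proof.
apply: (iffP andP) => [[/forall_inP H1 /forall_inP H2]|[H1 H2]]; split.
- by move=> i /H1 /andP.
- by move=> i /H2 /exists_inP[Q ? ?]; exists Q.
- by apply/forall_inP => i /H1 [-> ->].
- by apply/forall_inP => i /H2 [Q ? ?]; apply/exists_inP; exists Q.
Qed.

Definition max_guild (FF QQ : proc -> coll) (F : pset) : pset :=
  \bigcup_(G : pset | guildb FF QQ F G) G.

Definition kernel (QQ : proc -> coll) (i : proc) (K : pset) : Prop :=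
  forall Qi, Qi \in QQ i -> Qi :&: K != set0.
End Defs.

From mathcomp Require Import all_boot.

(* Since every fail-prone collection F_k is nonempty, the empty
   set lies in every F_k^*, so Consistency applied with F_ij = {} says that
   any two quorums, of any two processes, intersect.  A nonempty maximal
   guild contains some process p_j belonging to a guild G, and by the guild
   property p_j has a quorum Q_j inside G, hence inside G_max.  Every quorum
   Q_i then meets Q_j, and thus meets G_max. *)

Set Implicit Arguments.
Unset Strict Implicit.
Unset Printing Implicit Defensive.

Section MaximalGuildKernel.

Variable n : nat.
Implicit Types (FF QQ : 'I_n -> {set {set 'I_n}}) (A : {set {set 'I_n}}).
Implicit Types (F G K : {set 'I_n}).

Lemma set0_in_star A : A != set0 -> set0 \in star A.
Proof.
case/set0Pn=> X XA; rewrite inE; apply/exists_inP.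
by exists X; rewrite ?sub0set.
Qed.

Lemma quorums_intersect FF QQ i j Qi Qj :
    (forall k, FF k != set0) -> asym_quorum_system FF QQ ->
  Qi \in QQ i -> Qj \in QQ j -> Qi :&: Qj != set0.
Proof.
move=> FFne [consistency _] Qi_i Qj_j.
have := consistency i j Qi Qj set0 Qi_i Qj_j
  (set0_in_star (FFne i)) (set0_in_star (FFne j)).
by apply: contra => /eqP ->; rewrite sub0set.
Qed.

Lemma guild_sub_max_guild FF QQ F G :
  guild FF QQ F G -> G \subset max_guild FF QQ F.
Proof. by move/guildP=> guildG; exact: (bigcup_sup G guildG). Qed.

Lemma max_guild_quorum FF QQ F j : j \in max_guild FF QQ F ->
  exists2 Qj, Qj \in QQ j & Qj \subset max_guild FF QQ F.
Proof.
case/bigcupP=> G /guildP guildG jG.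
have [Qj Qj_j QjG] := guildG.2 j jG.
by exists Qj; last exact: subset_trans QjG (guild_sub_max_guild guildG).
Qed.

Lemma kernel_of_quorum_sub QQ i Qj K :
    (forall Qi, Qi \in QQ i -> Qi :&: Qj != set0) ->
  Qj \subset K -> kernel QQ i K.
Proof.
move=> meetQj QjK Qi Qi_i; apply: contraNneq (meetQj Qi Qi_i) => QiK0.
by rewrite -subset0 -QiK0 setIS.
Qed.

End MaximalGuildKernel.

Theorem mainTheorem4 (n : nat) (FF QQ : 'I_n -> {set {set 'I_n}}) (F : {set 'I_n}) :
  fail_prone_system FF ->
  (forall i, FF i != set0) ->
  asym_quorum_system FF QQ ->
  max_guild FF QQ F != set0 ->
  forall i : 'I_n, i \notin F -> kernel QQ i (max_guild FF QQ F).
Proof.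
move=> _ FFne QQsys /set0Pn[j j_max] i _.
have [Qj Qj_j Qj_max] := max_guild_quorum j_max.
apply: (kernel_of_quorum_sub _ Qj_max) => Qi Qi_i.
exact: quorums_intersect FFne QQsys Qi_i Qj_j.
Qed.
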